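(* Let $\mathbf{k}$ be an algebraically closed field of prime characteristic $p$ and let $R(p)$ be the Radford algebra over $\mathbf{k}$. Then the minimal polynomial of the sequence $\{\nu_n(R(p))\}_{n\ge1}$ of higher Frobenius–Schur indicators of $R(p)$ is $f(x)=x^p-1$.
   Context: The Radford algebra $R(p)$ is the Hopf algebra over $\mathbf{k}$ generated as an algebra by $g,x$ subject to the relations $g^p=1$, $x^p=x$, $gx-xg=g^2-g$ if $p>2$, and $g^2=1$, $x^2=x$, $gx-xg=1-g$ if $p=2$; its coalgebra structure is given by $\Delta(g)=g\otimes g$, $\Delta(x)=x\otimes 1+g\otimes x$, $\varepsilon(g)=1$, $\varepsilon(x)=0$. For a finite-dimensional Hopf algebra $H$ with multiplication $m$, comultiplication $\Delta$, counit $\varepsilon$ and antipode $S$: let $\Delta^{(1)}=\mathrm{id}$, $\Delta^{(n)}=(\Delta^{(n-1)}\otimes\mathrm{id})\circ\Delta$ for $n\ge 2$, $m^{(n)}(h_1\otimes\cdots\otimes h_n)=h_1\cdots h_n$, $P_0(h)=\varepsilon(h)1_H$, $P_n=m^{(n)}\circ\Delta^{(n)}$ for $n\ge1$, and $\nu_n(H)=\mathrm{Tr}(S\circ P_{n-1})$. A sequence $\{a_n\}_{n\ge1}$ in $\mathbf{k}$ satisfies a nonzero polynomial $f(x)=f_0+f_1x+\cdots+f_mx^m\in\mathbf{k}[x]$ if $f_0a_n+f_1a_{n+1}+\cdots+f_ma_{n+m}=0$ for all $n\ge1$; the sequence is linearly recursive if it satisfies some nonzero polynomial, and its minimal polynomial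 is the monic polynomial of least degree that it satisfies. *)

From HB Require Import structures.
From mathcomp Require Import all_boot all_order all_algebra all_field.
Set Implicit Arguments. Unset Strict Implicit. Unset Printing Implicit Defensive.
Import Order.TTheory GRing.Theory Num.Theory.
Local Open Scope ring_scope.

(* The Radford algebra R(p) over a field K, realised concretely on its PBW   *)
(* basis {g^i x^j | 0 <= i, j < p}.  An element is stored as a p x p matrix *)
(* A : 'M[K]_p, A i j being the coefficient of g^i x^j.                       *)
Section Radford.
Variables (K : fieldType) (p : nat).

Definition RH := 'M[K]_p.

Definition rbasis (i j : 'I_p) : RH := delta_mx i j.

(* exponent of x in x * x^j, using x^p = x *)
Definition nextx (j : 'I_p) : 'I_p :=
  if j.+1 == p then ordS (ordS j) else ordS j.

Definition lin_ext (f : 'I_p -> 'I_p -> RH) (A : RH) : RH :=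
  \sum_(i < p) \sum_(j < p) A i j *: f i j.

(* left multiplication by g and by x.  Since g^-1 x g = x - (g - 1)
   (from g x - x g = g^2 - g), one has
   x g^i x^j = g^i x^(j+1) + i g^i x^j - i g^(i+1) x^j. *)
Definition Lg : RH -> RH := lin_ext (fun i j => rbasis (ordS i) j).
Definition Lx : RH -> RH :=
  lin_ext (fun i j => rbasis i (nextx j) + (i : nat)%:R *: rbasis i j
                      - (i : nat)%:R *: rbasis (ordS i) j).

Definition rmul (A B : RH) : RH :=
  \sum_(i < p) \sum_(j < p) A i j *: iter i Lg (iter j Lx B).

Definition rone : RH := \matrix_(i, j) ((i == 0%N :> nat) && (j == 0%N :> nat))%:R.
Definition rg : RH := \matrix_(i, j) ((i == 1%N :> nat) && (j == 0%N :> nat))%:R.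
Definition rginv : RH := \matrix_(i, j) ((i == p.-1 :> nat) && (j == 0%N :> nat))%:R.
Definition rx : RH := \matrix_(i, j) ((i == 0%N :> nat) && (j == 1%N :> nat))%:R.

(* counit: eps(g) = 1, eps(x) = 0, so eps(g^i x^j) = [j == 0] *)
Definition reps (A : RH) : K := \sum_(i < p) \sum_(j < p) (j == 0%N :> nat)%:R * A i j.

(* antipode: S(g) = g^-1, S(x) = - g^-1 x, S anti-multiplicative:
   S(g^i x^j) = S(x)^j S(g)^i *)
Definition rSx : RH := - rmul rginv rx.
Definition rS : RH -> RH :=
  lin_ext (fun i j => iter j (rmul rSx) (iter i (rmul rginv) rone)).

(* H (x) H: T = sum_(i,j) (g^i x^j) (x) T i j *)
Definition RT := 'M[RH]_p.
Definition rtens (a b : RH) : RT := \matrix_(i, j) (a i j *: b).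
Definition rtscale (c : K) (T : RT) : RT := \matrix_(i, j) (c *: T i j).
Definition rtmul (T U : RT) : RT :=
  \matrix_(a, b) \sum_(i < p) \sum_(j < p) \sum_(k < p) \sum_(l < p)
     (rmul (rbasis i j) (rbasis k l)) a b *: rmul (T i j) (U k l).

(* comultiplication: Delta(g) = g (x) g, Delta(x) = x (x) 1 + g (x) x,
   Delta(g^i x^j) = Delta(g)^i Delta(x)^j *)
Definition rDg : RT := rtens rg rg.
Definition rDx : RT := rtens rx rone + rtens rg rx.
Definition rDelta (A : RH) : RT :=
  \sum_(i < p) \sum_(j < p)
     rtscale (A i j) (iter i (rtmul rDg) (iter j (rtmul rDx) (rtens rone rone))).

(* P_0(h) = eps(h) 1, P_1 = id, and P_n = m^(n) o Delta^(n); since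
   Delta^(n) = (Delta^(n-1) (x) id) o Delta, this unfolds to
   P_n(h) = sum P_(n-1)(h_(1)) h_(2). *)
Fixpoint rP (n : nat) (A : RH) : RH :=
  match n with
  | 0%N => reps A *: rone
  | 1%N => A
  | S ((S _) as m) =>
      let D := rDelta A in
      \sum_(i < p) \sum_(j < p) rmul (rP m (rbasis i j)) (D i j)
  end.

Definition rtrace (f : RH -> RH) : K :=
  \sum_(i < p) \sum_(j < p) (f (rbasis i j)) i j.

Definition radford_nu (n : nat) : K := rtrace (fun A => rS (rP n.-1 A)).

End Radford.

Definition seq_satisfies (K : fieldType) (a : nat -> K) (f : {poly K}) : Prop :=
  forall n : nat, (1 <= n)%N -> \sum_(i < size f) f`_i * a (n + i)%N = 0.

Definition is_minimal_poly_seq (K : fieldType) (a : nat -> K) (f : {poly K}) : Prop :=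
  [/\ f \is monic, seq_satisfies a f &
      forall g : {poly K}, g != 0 -> seq_satisfies a g -> (size f <= size g)%N].

From HB Require Import structures.
From mathcomp Require Import all_boot all_order all_algebra all_field.
From mathcomp Require Import ring zify.
Set Implicit Arguments. Unset Strict Implicit. Unset Printing Implicit Defensive.
Import GRing.Theory.
Local Open Scope ring_scope.

(* Filter R(p) by the x-degree of the PBW basis g^i x^j.  Multiplication, the
   coproduct, the antipode and hence every P_m respect this filtration, so
   Tr(S o P_m) only sees top-degree coefficients.  The x^k-coefficient of
   P_m(g^i x^k) is a function [rP_lead m k] of the g-exponent shifted by i m,
   whose values add up to m^k (binomial theorem, from Delta(x) = x (x) 1 + g (x) x),
   while S(g^i x^k) has top term (-1)^k g^(-i-k) x^k.  Hence nu_(m+1) is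
   sum_(k<p) (-m)^k = 1 when p does not divide m+1 (as (-m)^p = -m), and 0 when
   it does (the g-exponent is then not moved and each coefficient is counted p
   times).  The sequence [p does not divide n] has minimal polynomial x^p - 1:
   a relation of length at most p forces all its coefficients to be equal, and
   then to vanish. *)

Lemma addr_eq_sub (V : zmodType) (x y z : V) : (x + z == y) = (x == y - z).
Proof. by apply/eqP/eqP => [<-|->]; rewrite ?addrK ?subrK. Qed.

Lemma seq_satisfies_Xn_sub1 (K : fieldType) (a : nat -> K) (p : nat) : (0 < p)%N ->
  (forall n, (0 < n)%N -> a (n + p)%N = a n) -> seq_satisfies a ('X^p - 1).
Proof.
case: p => // p _ a_per n n_gt0; rewrite size_XnsubC // big_ord_recr big_ord_recl /=.
rewrite big1 ?add0r => [|i _]; last first.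
  by rewrite coefB coefXn coef1 /bump /= add1n eqSS (ltn_eqF (ltn_ord i)) subr0 mul0r.
rewrite !coefB !coefXn !coef1 eqxx /= subr0 sub0r mul1r mulN1r addn0.
by rewrite a_per // addr0 addNr.
Qed.

Lemma ndvdn_subnDr (p i j : nat) : (i < p)%N -> (j < p)%N -> i != j -> ~~ (p %| p - j + i)%N.
Proof.
move=> ip jp ij; apply/negP => /dvdnP [k].
case: k => [|[|k]]; rewrite ?mul0n ?mul1n ?mulSn.
- lia.
- by move=> /eqP; rewrite -{2}(subnK (ltnW jp)) eqn_add2l (negbTE ij).
- lia.
Qed.

Lemma annihilator_ndvd_size (K : fieldType) (p : nat) (a : nat -> K) (g : {poly K}) :
  p \in [pchar K] -> (forall n, (0 < n)%N -> a n = (~~ (p %| n)%N)%:R) ->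
  g != 0 -> seq_satisfies a g -> (p < size g)%N.
Proof.
move=> pcharK aE g_neq0 g_ann; have p_gt1 := prime_gt1 (pcharf_prime pcharK).
rewrite ltnNge; apply/negP => g_small.
set N := size g in g_small; have N_gt0 : (0 < N)%N by rewrite size_poly_gt0.
set s := \sum_(i < N) g`_i.
(* At n = p - i0, the index i0 is the only one hitting a multiple of p. *)
have coef_s i0 : (i0 < N)%N -> g`_i0 = s.
  move=> i0N; have i0p := leq_trans i0N g_small.
  have := g_ann (p - i0)%N; rewrite subn_gt0 i0p => /(_ isT).
  rewrite (bigD1 (Ordinal i0N)) //= (subnK (ltnW i0p)) (aE _ (ltnW p_gt1)).
  rewrite dvdnn mulr0 add0r => E.
  suff rest : \sum_(i < N | i != Ordinal i0N) g`_i = 0.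
    by rewrite /s (bigD1 (Ordinal i0N)) //= rest addr0.
  rewrite -[RHS]E; apply: eq_bigr => i ne.
  have ip : (i < p)%N := leq_trans (ltn_ord i) g_small.
  by rewrite aE ?addn_gt0 ?subn_gt0 ?i0p // ndvdn_subnDr ?mulr1.
have s_neq0 : s != 0 by rewrite -(coef_s N.-1) ?prednK // -lead_coefE lead_coef_eq0.
have sN : s *+ N.-1 = 0.
  apply: (@addrI _ s); rewrite -mulrS prednK // addr0 {2}/s.
  by rewrite (eq_bigr (fun _ => s)) ?sumr_const ?card_ord // => i _; apply: coef_s.
have N1 : N = 1%N.
  move: sN; rewrite -mulr_natr => /eqP; rewrite mulf_eq0 (negbTE s_neq0) /=.
  rewrite -(dvdn_pcharf pcharK); case: (posnP N.-1) => [N0|N_gt1 /(dvdn_leq N_gt1)].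
    by rewrite -(prednK N_gt0) N0.
  by move=> pN; lia.
have := g_ann 1%N isT; rewrite -/N N1 big_ord1 aE // dvdn1 gtn_eqF // mulr1.
by move=> g0; move: s_neq0; rewrite -(coef_s 0%N) ?N1 // g0 eqxx.
Qed.

Lemma is_minimal_poly_seq_ndvd (K : fieldType) (p : nat) (a : nat -> K) :
  p \in [pchar K] -> (forall n, (0 < n)%N -> a n = (~~ (p %| n)%N)%:R) ->
  is_minimal_poly_seq a ('X^p - 1).
Proof.
move=> pcharK aE; have p_gt0 := prime_gt0 (pcharf_prime pcharK).
split; first exact: monicXnsubC.
- apply: seq_satisfies_Xn_sub1 => // n n_gt0.
  by rewrite !aE ?addn_gt0 ?n_gt0 // dvdn_addl.
- by move=> g g_neq0 g_ann; rewrite size_XnsubC //; apply: annihilator_ndvd_size aE _ _.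
Qed.

Section RadfordLeadingTerms.
Variables (K : fieldType) (q : nat).
Local Notation p := q.+2.
Local Notation H := (RH K p).
Local Notation T := (RT K p).
Implicit Types (A B : H) (t i j k : 'I_p).

Lemma ordS_addr1 i : ordS i = i + 1.
Proof. by apply: val_inj => /=; rewrite modnDmr addn1. Qed.

Lemma rbasisE i0 j0 i j : rbasis K i0 j0 i j = ((i == i0) && (j == j0))%:R.
Proof. by rewrite mxE. Qed.

Lemma sum_mul_eqb (F : 'I_p -> K) t : \sum_i F i * (i == t)%:R = F t.
Proof.
under eq_bigr => i _ do rewrite mulr_natr mulrb.
by rewrite -big_mkcond big_pred1_eq.
Qed.

Lemma sum_rbasis_coord (M : lmodType K) (F : 'I_p -> 'I_p -> M) x y :
  \sum_k \sum_l rbasis K k l x y *: F k l = F x y.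
Proof.
under eq_bigr => k _ do under eq_bigr => l _ do
  rewrite rbasisE [x == k]eq_sym [y == l]eq_sym -mulnb natrM -scalerA.
under eq_bigr => k _ do rewrite -scaler_sumr.
rewrite (bigD1 x) //= [X in _ + X]big1 => [|k kx]; last by rewrite (negbTE kx) scale0r.
rewrite eqxx scale1r addr0 (bigD1 y) //= [X in _ + X]big1 => [|l ly].
  by rewrite eqxx scale1r addr0.
by rewrite (negbTE ly) scale0r.
Qed.

Lemma lin_extE f A t j : lin_ext f A t j = \sum_i \sum_l A i l * f i l t j.
Proof.
rewrite /lin_ext summxE; apply: eq_bigr => i _; rewrite summxE.
by apply: eq_bigr => l _; rewrite mxE.
Qed.

Lemma lin_ext0 f : lin_ext f (0 : H) = 0.
Proof. by rewrite /lin_ext big1 // => i _; rewrite big1 // => j _; rewrite mxE scale0r. Qed.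

Lemma LgE A t j : Lg A t j = A (t - 1) j.
Proof.
rewrite /Lg lin_extE (bigD1 (t - 1)) //= [X in _ + X]big1 ?addr0; last first.
  move=> i ne; apply: big1 => l _; rewrite rbasisE ordS_addr1 eq_sym addr_eq_sub.
  by rewrite (negbTE ne) mulr0.
under eq_bigr => l _ do rewrite rbasisE ordS_addr1 subrK eqxx eq_sym.
exact: sum_mul_eqb.
Qed.

Lemma iter_LgE n A t j : iter n (@Lg K p) A t j = A (t - n%:R) j.
Proof.
elim: n t => [|n IH] t /=; first by rewrite subr0.
by rewrite LgE IH -addrA -opprD nat1r.
Qed.

Lemma LxE A t j : Lx A t j = \sum_l A t l *+ (j == nextx l)
   + (nat_of_ord t)%:R * A t j - (nat_of_ord (t - 1))%:R * A (t - 1) j.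
Proof.
rewrite /Lx lin_extE.
transitivity (\sum_i (\sum_l A i l *+ (j == nextx l) * (i == t)%:R)
  + \sum_i (\sum_l (nat_of_ord i)%:R * A i l * (l == j)%:R) * (i == t)%:R
  - \sum_i (\sum_l (nat_of_ord i)%:R * A i l * (l == j)%:R) * (i == t - 1)%:R).
  rewrite -big_split -sumrB /=; apply: eq_bigr => i _.
  rewrite !big_distrl -big_split -sumrB /=; apply: eq_bigr => l _.
  rewrite !mxE ordS_addr1 [t == i]eq_sym [j == l]eq_sym [t == i + 1]eq_sym addr_eq_sub.
  rewrite -!mulnb !natrM -mulr_natr; ring.
congr (_ + _ - _); last by rewrite sum_mul_eqb sum_mul_eqb.
- rewrite exchange_big /=; apply: eq_bigr => l _.
  by rewrite -(sum_mul_eqb (fun i => A i l *+ _)); apply: eq_bigr => i _; rewrite mulrnAl.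
- by rewrite sum_mul_eqb sum_mul_eqb.
Qed.

Lemma nextxE (l : 'I_p) : (nextx l : nat) = if l.+1 == p then 1%N else l.+1.
Proof.
rewrite /nextx; case: eqP => [e|ne] /=; first by rewrite e modnn.
by rewrite modn_small // ltn_neqAle (introN eqP ne) ltn_ord.
Qed.

Lemma nextx_neq0 (l : 'I_p) : (nextx l : nat) != 0%N.
Proof. by rewrite nextxE; case: ifP. Qed.

Lemma nextx_succ (l j : 'I_p) : j = l.+1 :> nat -> nextx l = j.
Proof.
move=> jl; apply: val_inj; rewrite /= nextxE -jl; case: eqP => // jp.
by have := ltn_ord j; rewrite jp ltnn.
Qed.

Lemma sum_nextx0 (M : zmodType) (F : 'I_p -> M) (j : 'I_p) :
  j = 0%N :> nat -> \sum_l F l *+ (j == nextx l) = 0.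
Proof.
move=> j0; apply: big1 => l _; case: eqP => [jl|]; last by rewrite mulr0n.
by have := nextx_neq0 l; rewrite -jl j0.
Qed.

Lemma sum_nextx_succ (M : zmodType) (F : 'I_p -> M) (j j' : 'I_p) :
  F ord_max = 0 -> j = j'.+1 :> nat -> \sum_l F l *+ (j == nextx l) = F j'.
Proof.
move=> Fmax jj'; rewrite (bigD1 j') //= (nextx_succ jj') eqxx [X in _ + X]big1 ?addr0 //.
move=> l lj'; case: eqP => [jl|]; last by rewrite mulr0n.
move: jj'; rewrite jl nextxE; case: eqP => [lp [j'0]|_ [lj]]; last first.
  by move: lj'; rewrite -val_eqE /= lj eqxx.
suff -> : l = ord_max by rewrite Fmax mul0rn.
by apply: val_inj; case: lp.
Qed.

Definition xdeg_le (d : nat) A := forall t j, (d < j)%N -> A t j = 0.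

Lemma xdeg_le_trans d e A : (d <= e)%N -> xdeg_le d A -> xdeg_le e A.
Proof. by move=> de Ad t j ej; apply: Ad; apply: leq_ltn_trans ej. Qed.

Lemma xdeg_le0 d : xdeg_le d 0.
Proof. by move=> t j _; rewrite mxE. Qed.

Lemma xdeg_leD d A B : xdeg_le d A -> xdeg_le d B -> xdeg_le d (A + B).
Proof. by move=> Ad Bd t j dj; rewrite mxE Ad ?Bd ?addr0. Qed.

Lemma xdeg_leN d A : xdeg_le d A -> xdeg_le d (- A).
Proof. by move=> Ad t j dj; rewrite mxE Ad ?oppr0. Qed.

Lemma xdeg_leB d A B : xdeg_le d A -> xdeg_le d B -> xdeg_le d (A - B).
Proof. by move=> Ad Bd; apply: xdeg_leD => //; apply: xdeg_leN. Qed.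

Lemma xdeg_leZ d c A : xdeg_le d A -> xdeg_le d (c *: A).
Proof. by move=> Ad t j dj; rewrite mxE Ad ?mulr0. Qed.

Lemma xdeg_le_sum d (I : finType) (F : I -> H) :
  (forall x, xdeg_le d (F x)) -> xdeg_le d (\sum_x F x).
Proof.
by move=> Fd; apply: (big_ind (xdeg_le d)) => //; [apply: xdeg_le0 | apply: xdeg_leD].
Qed.

Lemma Lx_xdeg d A : xdeg_le d A -> xdeg_le d.+1 (Lx A).
Proof.
move=> Ad t j dj; have dj' : (d < j)%N by apply: ltnW.
rewrite LxE !Ad // !mulr0 subr0 addr0 big1 // => l _.
case: eqP => [jl|]; last by rewrite mulr0n.
move: dj; rewrite jl nextxE; case: eqP => // _ dl.
by rewrite Ad ?mul0rn.
Qed.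

Lemma Lx_top A t (j j' : 'I_p) : xdeg_le j' A -> j = j'.+1 :> nat -> Lx A t j = A t j'.
Proof.
move=> Aj' jj'; rewrite LxE (Aj' t j) ?(Aj' (t - 1) j) ?jj' // !mulr0 subr0 addr0.
apply: (sum_nextx_succ (F := A t) _ jj'); apply: Aj'.
by rewrite /= -ltnS -jj' ltn_ord.
Qed.

Lemma iter_Lx_xdeg n d A : xdeg_le d A -> xdeg_le (n + d) (iter n (@Lx K p) A).
Proof. by move=> Ad; elim: n => //= n IH; apply: Lx_xdeg. Qed.

Lemma iter_Lx_top n A t (j j' : 'I_p) : xdeg_le j' A -> j = (n + j')%N :> nat ->
  iter n (@Lx K p) A t j = A t j'.
Proof.
move=> Aj'; elim: n j => [|n IH] j /= jj'; first by congr (A t _); apply: val_inj.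
have lt : (n + j' < p)%N by apply: leq_ltn_trans (ltn_ord j); rewrite jj'.
by rewrite (@Lx_top _ t _ (Ordinal lt)) ?IH //; apply: iter_Lx_xdeg.
Qed.

Lemma iter_Lg_xdeg n d A : xdeg_le d A -> xdeg_le d (iter n (@Lg K p) A).
Proof. by move=> Ad t j dj; rewrite iter_LgE Ad. Qed.

Lemma rmulE A B t c :
  rmul A B t c = \sum_i \sum_j A i j * iter j (@Lx K p) B (t - i) c.
Proof.
rewrite /rmul summxE; apply: eq_bigr => i _; rewrite summxE.
by apply: eq_bigr => j _; rewrite !mxE iter_LgE natr_Zp.
Qed.

Lemma rmul_xdeg a b A B : xdeg_le a A -> xdeg_le b B -> xdeg_le (a + b) (rmul A B).
Proof.
move=> Aa Bb t c abc; rewrite rmulE big1 // => i _; rewrite big1 // => j _.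
case: (leqP j a) => ja; last by rewrite Aa ?mul0r.
rewrite (iter_Lx_xdeg (n := j) Bb) ?mulr0 //.
by apply: leq_ltn_trans abc; rewrite leq_add2r.
Qed.

Lemma rmul_top A B t (a b c : 'I_p) : xdeg_le a A -> xdeg_le b B ->
  c = (a + b)%N :> nat -> rmul A B t c = \sum_i A i a * B (t - i) b.
Proof.
move=> Aa Bb cab; rewrite rmulE; apply: eq_bigr => i _.
rewrite (bigD1 a) //= [X in _ + X]big1 ?addr0; first by rewrite (iter_Lx_top (n := a) _ Bb).
move=> j ja; case: (ltngtP j a) => [lt|gt|e].
- by rewrite (iter_Lx_xdeg (n := j) Bb) ?mulr0 // cab ltn_add2r.
- by rewrite Aa ?mul0r.
- by move: ja; rewrite (_ : j = a) ?eqxx //; apply: val_inj.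
Qed.

Lemma rbasis_xdeg i k : xdeg_le k (rbasis K i k).
Proof. by move=> t j kj; rewrite rbasisE -[j == k]val_eqE (gtn_eqF kj) andbF. Qed.

Lemma rbasis_top i (k : 'I_p) t : rbasis K i k t k = (t == i)%:R.
Proof. by rewrite rbasisE eqxx andbT. Qed.

Lemma rbasis_coordE A i0 j0 :
  (forall i j, A i j = ((i == i0) && (j == j0))%:R) -> A = rbasis K i0 j0.
Proof. by move=> E; apply/matrixP => i j; rewrite E rbasisE. Qed.

Lemma rone_rbasis : @rone K p = rbasis K 0 0.
Proof. by apply: rbasis_coordE => i j; rewrite mxE -!val_eqE. Qed.

Lemma rone_xdeg : xdeg_le 0 (@rone K p).
Proof. by rewrite rone_rbasis; apply: (@rbasis_xdeg 0 0). Qed.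

Lemma rg_rbasis : @rg K p = rbasis K 1 0.
Proof. by apply: rbasis_coordE => i j; rewrite mxE -!val_eqE. Qed.

Lemma rx_rbasis : @rx K p = rbasis K 0 1.
Proof. by apply: rbasis_coordE => i j; rewrite mxE -!val_eqE. Qed.

Lemma rginv_rbasis : @rginv K p = rbasis K (-1) 0.
Proof.
apply: rbasis_coordE => i j; rewrite mxE -!val_eqE /=.
by rewrite [in RHS]modn_small // subSS subn0 modn_small.
Qed.

Lemma rmul_rbasis i0 j0 B :
  rmul (rbasis K i0 j0) B = iter i0 (@Lg K p) (iter j0 (@Lx K p) B).
Proof.
rewrite /rmul (bigD1 i0) //= [X in _ + X]big1 ?addr0 => [|i ne]; last first.
  by apply: big1 => j _; rewrite rbasisE (negbTE ne) scale0r.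
rewrite (bigD1 j0) //= [X in _ + X]big1 ?addr0 => [|j ne]; last first.
  by rewrite rbasisE eqxx (negbTE ne) scale0r.
by rewrite rbasisE !eqxx scale1r.
Qed.

Lemma rmul_rbasis0E i0 B t j : rmul (rbasis K i0 0) B t j = B (t - i0) j.
Proof. by rewrite rmul_rbasis iter_LgE natr_Zp. Qed.

Lemma rmul_rginv_rbasis i k : rmul (@rginv K p) (rbasis K i k) = rbasis K (i - 1) k.
Proof.
apply/matrixP => t j; rewrite rginv_rbasis rmul_rbasis0E !rbasisE opprK.
by rewrite addr_eq_sub.
Qed.

Lemma rSx_rbasis : @rSx K p = - rbasis K (-1) 1.
Proof.
congr (- _); apply/matrixP => t j.
by rewrite rx_rbasis rmul_rginv_rbasis sub0r.
Qed.

Lemma iter_rmul_rginv a : iter a (rmul (@rginv K p)) (@rone K p) = rbasis K (- a%:R) 0.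
Proof.
elim: a => [|a IH] /=; first by rewrite oppr0 rone_rbasis.
by rewrite IH rmul_rginv_rbasis -opprD -natr1 addrC.
Qed.

Lemma rSx_xdeg : xdeg_le 1 (@rSx K p).
Proof. by rewrite rSx_rbasis; apply: xdeg_leN (@rbasis_xdeg (-1) 1). Qed.

Lemma iter_rmul_rSx_xdeg s n : xdeg_le n (iter n (rmul (@rSx K p)) (rbasis K s 0)).
Proof.
elim: n => [|n IH] /=; first exact: (@rbasis_xdeg s 0).
by rewrite -add1n; apply: rmul_xdeg rSx_xdeg IH.
Qed.

Lemma iter_rmul_rSx_top s n t (c : 'I_p) : c = n :> nat ->
  iter n (rmul (@rSx K p)) (rbasis K s 0) t c = (-1) ^+ n * (t == s - n%:R)%:R.
Proof.
elim: n t c => [|n IH] t c cn /=.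
  by rewrite (_ : c = 0) ?rbasis_top ?mul1r ?subr0 //; apply: val_inj.
have n_lt : (n < p)%N by rewrite -ltnS -cn ltnS ltnW.
rewrite (@rmul_top _ _ t 1 (Ordinal n_lt) c rSx_xdeg (@iter_rmul_rSx_xdeg s n)) //.
under eq_bigr => i _ do rewrite IH // rSx_rbasis mxE rbasis_top mulNr mulrC -mulNr.
rewrite sum_mul_eqb opprK exprS mulN1r -mulNr; congr (- _ * _).
by rewrite addr_eq_sub -natr1 opprD addrA.
Qed.

Lemma rS_top A t (c : 'I_p) : xdeg_le c A ->
  rS A t c = (-1) ^+ c * A (- t - (nat_of_ord c)%:R) c.
Proof.
move=> Ac; rewrite /rS lin_extE.
transitivity (\sum_i A i c * ((-1) ^+ c * (i == - t - (nat_of_ord c)%:R)%:R)).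
  apply: eq_bigr => i _; rewrite iter_rmul_rginv natr_Zp.
  rewrite (bigD1 c) //= [X in _ + X]big1 ?addr0 => [|j jc].
    rewrite iter_rmul_rSx_top //; congr (_ * (_ * (nat_of_bool _)%:R)).
    by apply/eqP/eqP => ->; ring.
  case: (ltngtP j c) => [lt|gt|e].
  - by rewrite iter_rmul_rSx_xdeg ?mulr0.
  - by rewrite Ac ?mul0r.
  - by move: jc; rewrite (_ : j = c) ?eqxx //; apply: val_inj.
under eq_bigr => i _ do rewrite mulrCA.
by rewrite -big_distrr /= sum_mul_eqb.
Qed.

Lemma rmulZl c A B : rmul (c *: A) B = c *: rmul A B.
Proof.
rewrite /rmul scaler_sumr; apply: eq_bigr => i _; rewrite scaler_sumr.
by apply: eq_bigr => j _; rewrite mxE scalerA.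
Qed.

Lemma rmulDl A1 A2 B : rmul (A1 + A2) B = rmul A1 B + rmul A2 B.
Proof.
rewrite /rmul -big_split; apply: eq_bigr => i _; rewrite -big_split.
by apply: eq_bigr => j _; rewrite mxE scalerDl.
Qed.

Lemma Lx0 : @Lx K p 0 = 0.
Proof. exact: lin_ext0. Qed.

Lemma rmulr0 A : rmul A 0 = 0.
Proof.
have iter0 f n : f 0 = 0 -> iter n f (0 : H) = 0 by move=> f0; elim: n => //= n ->.
rewrite /rmul big1 // => i _; rewrite big1 // => j _.
by rewrite !iter0 ?scaler0 //; apply: lin_ext0.
Qed.

Lemma rmul_rone B : rmul (@rone K p) B = B.
Proof. by rewrite rone_rbasis rmul_rbasis. Qed.

Lemma rmul_rg B : rmul (@rg K p) B = Lg B.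
Proof. by rewrite rg_rbasis rmul_rbasis. Qed.

Lemma rmul_rx B : rmul (@rx K p) B = Lx B.
Proof. by rewrite rx_rbasis rmul_rbasis. Qed.

Lemma rtmulDl (U1 U2 V : T) : rtmul (U1 + U2) V = rtmul U1 V + rtmul U2 V.
Proof.
apply/matrixP => a b; rewrite !mxE -!big_split; apply: eq_bigr => i _.
rewrite -!big_split; apply: eq_bigr => j _.
rewrite -!big_split; apply: eq_bigr => k _.
rewrite -!big_split; apply: eq_bigr => l _.
by rewrite mxE rmulDl scalerDr.
Qed.

Lemma rtmul_rtens i0 j0 B (U : T) a b :
  rtmul (rtens (rbasis K i0 j0) B) U a b =
  \sum_k \sum_l (rmul (rbasis K i0 j0) (rbasis K k l)) a b *: rmul B (U k l).
Proof.
rewrite mxE (bigD1 i0) //= [X in _ + X]big1 ?addr0 => [|i ne]; last first.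
  apply: big1 => j _; apply: big1 => k _; apply: big1 => l _.
  by rewrite mxE rbasisE (negbTE ne) rmulZl scale0r scaler0.
rewrite (bigD1 j0) //= [X in _ + X]big1 ?addr0 => [|j ne]; last first.
  apply: big1 => k _; apply: big1 => l _.
  by rewrite mxE rbasisE eqxx (negbTE ne) rmulZl scale0r scaler0.
apply: eq_bigr => k _; apply: eq_bigr => l _.
by rewrite mxE rbasisE !eqxx rmulZl scale1r.
Qed.

Lemma rtmul_rDg (U : T) a b : rtmul (@rDg K p) U a b = Lg (U (a - 1) b).
Proof.
rewrite /rDg {1}rg_rbasis rtmul_rtens.
under eq_bigr => k _ do under eq_bigr => l _ do rewrite -rg_rbasis !rmul_rg LgE.
exact: (sum_rbasis_coord (fun k l => Lg (U k l))).
Qed.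

Lemma iter_rtmul_rDgE n (U : T) a b :
  iter n (rtmul (@rDg K p)) U a b = iter n (@Lg K p) (U (a - n%:R) b).
Proof.
elim: n a => [|n IH] a /=; first by rewrite subr0.
by rewrite rtmul_rDg IH -addrA -opprD nat1r.
Qed.

Lemma rtmul_rDx (U : T) a b : rtmul (@rDx K p) U a b =
  \sum_l U a l *+ (b == nextx l) + (nat_of_ord a)%:R *: U a b
  - (nat_of_ord (a - 1))%:R *: U (a - 1) b + Lx (U (a - 1) b).
Proof.
rewrite /rDx rtmulDl mxE [in X in X + _]rx_rbasis [in X in _ + X]rg_rbasis !rtmul_rtens.
congr (_ + _); last first.
  under eq_bigr => k _ do under eq_bigr => l _ do rewrite -rg_rbasis rmul_rg rmul_rx LgE.
  exact: (sum_rbasis_coord (fun k l => Lx (U k l))).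
under eq_bigr => k _ do under eq_bigr => l _ do
  rewrite -rx_rbasis rmul_rx rmul_rone LxE !scalerDl scaleNr.
under eq_bigr => k _ do rewrite !big_split sumrN.
rewrite !big_split sumrN.
congr (_ + _ - _).
- under eq_bigr => k _ do under eq_bigr => l _ do rewrite scaler_suml.
  under eq_bigr => k _ do rewrite exchange_big.
  rewrite exchange_big; apply: eq_bigr => m _.
  under eq_bigr => k _ do under eq_bigr => l _ do rewrite -mulr_natr -scalerA scaler_nat.
  exact: (sum_rbasis_coord (fun k l => U k l *+ (b == nextx m))).
- under eq_bigr => k _ do under eq_bigr => l _ do rewrite mulrC -scalerA.
  exact: (sum_rbasis_coord (fun k l => (nat_of_ord a)%:R *: U k l)).
- under eq_bigr => k _ do under eq_bigr => l _ do rewrite mulrC -scalerA.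
  exact: (sum_rbasis_coord (fun k l => (nat_of_ord (a - 1))%:R *: U k l)).
Qed.

Definition txdeg_le (d : nat) (U : T) :=
  forall a b : 'I_p, ((d < b)%N -> U a b = 0) /\ xdeg_le (d - b) (U a b).

Definition rDx_pow (k : nat) : T := iter k (rtmul (@rDx K p)) (rtens (@rone K p) (@rone K p)).

Lemma rDx_pow0E a b : rDx_pow 0 a b = ((a == 0) && (b == 0))%:R *: @rone K p.
Proof. by rewrite /rDx_pow /= mxE rone_rbasis rbasisE. Qed.

Lemma ord_pred_exists (b : 'I_p) : (0 < b)%N -> exists b' : 'I_p, nat_of_ord b = b'.+1.
Proof.
move=> b0; exists (Ordinal (leq_ltn_trans (leq_pred b) (ltn_ord b))).
by rewrite /= prednK.
Qed.

Lemma rDx_pow_xdeg (k : nat) : (k < p)%N -> txdeg_le k (rDx_pow k).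
Proof.
elim: k => [|k IH] lt a b.
  rewrite rDx_pow0E; split; last exact/xdeg_leZ/rone_xdeg.
  by move=> b0; rewrite -[b == 0]val_eqE /= (gtn_eqF b0) andbF scale0r.
have {}IH := IH (ltnW lt).
have top0 a' : rDx_pow k a' ord_max = 0 by apply: (IH _ _).1; rewrite /= -ltnS.
rewrite /rDx_pow /= rtmul_rDx -/(rDx_pow k); split.
  move=> kb; have [b' bb'] := ord_pred_exists (leq_ltn_trans (leq0n _) kb).
  rewrite (sum_nextx_succ (top0 a) bb') (IH a b').1; last by rewrite -ltnS -bb'.
  by rewrite (IH a b).1 ?(IH (a - 1) b).1 ?(ltnW kb) // Lx0 !scaler0 !addr0 subr0.
apply: xdeg_leD; first apply: xdeg_leB; first apply: xdeg_leD.
- case: (posnP b) => [b0|bp]; first by rewrite (sum_nextx0 _ b0); apply: xdeg_le0.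
  have [b' bb'] := ord_pred_exists bp.
  by rewrite (sum_nextx_succ (top0 a) bb') bb' subSS; apply: (IH a b').2.
- by apply/xdeg_leZ/(xdeg_le_trans _ (IH a b).2); rewrite leq_sub2r.
- by apply/xdeg_leZ/(xdeg_le_trans _ (IH (a - 1) b).2); rewrite leq_sub2r.
case: (leqP b k) => bk; first by rewrite subSn //; apply/Lx_xdeg/(IH (a - 1) b).2.
by rewrite (IH (a - 1) b).1 // Lx0; apply: xdeg_le0.
Qed.

Lemma rDx_pow_top (k : nat) (a b t c : 'I_p) :
  (k < p)%N -> (b <= k)%N -> c = (k - b)%N :> nat ->
  rDx_pow k a b t c = 'C(k, b)%:R * (a == (k - b)%N%:R)%:R * (t == 0)%:R.
Proof.
elim: k a b t c => [|k IH] a b t c lt bk cE.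
  have b0 : b = 0 by apply: val_inj => /=; move: bk; rewrite leqn0 => /eqP.
  have c0 : c = 0 by apply: val_inj.
  by rewrite rDx_pow0E mxE b0 c0 rone_rbasis rbasis_top eqxx andbT bin0 mul1r subn0.
have pow_deg := rDx_pow_xdeg (ltnW lt).
have top0 a' : rDx_pow k a' ord_max = 0 by apply: (pow_deg _ _).1; rewrite /= -ltnS.
rewrite /rDx_pow /= rtmul_rDx -/(rDx_pow k) !mxE.
(* The two middle summands of [rtmul_rDx] have lower degree; the other two
   give Pascal's rule. *)
case: (posnP b) => [b0|bp].
  rewrite (sum_nextx0 _ b0) mxE add0r; rewrite b0 subn0 in cE.
  have k_lt : (k < p)%N := ltnW lt.
  have kbc : (k - b < c)%N by rewrite cE b0 subn0.
  rewrite (pow_deg a b).2 // (pow_deg (a - 1) b).2 // !mulr0 subr0 add0r.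
  rewrite (@Lx_top _ t _ (Ordinal k_lt)) //.
    by rewrite IH ?b0 ?subn0 // !bin0 subr_eq natr1.
  by have := (pow_deg (a - 1) b).2; rewrite b0 subn0.
have [b' bb'] := ord_pred_exists bp.
have b'k : (b' <= k)%N by rewrite -ltnS -bb'.
rewrite (sum_nextx_succ (top0 a) bb') (IH a b' t c) ?cE ?bb' ?subSS //; last exact: ltnW.
case: (leqP b k) => bk'.
  have cE' : nat_of_ord c = (k - b).+1 by rewrite cE subSn.
  have kbc : (k - b < c)%N by rewrite cE'.
  rewrite (pow_deg a b).2 // (pow_deg (a - 1) b).2 // !mulr0 subr0 addr0.
  have kb_lt : (k - b < p)%N by apply: leq_ltn_trans (leq_subr b k) (ltnW lt).
  rewrite (@Lx_top _ t c (Ordinal kb_lt)) //; last exact: (pow_deg _ _).2.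
  rewrite IH //; last exact: ltnW.
  have e1 : (k - b' = (k - b).+1)%N by rewrite bb' subnSK // -bb'.
  by rewrite subr_eq natr1 -e1 bb' binS natrD !mulrDl addrC.
have bk1 : nat_of_ord b = k.+1 by apply/eqP; rewrite eqn_leq bk' andbT.
have b'k1 : nat_of_ord b' = k by move: bk1; rewrite bb' => -[].
rewrite (pow_deg a b).1 ?(pow_deg (a - 1) b).1 ?bk1 // !mxE !mulr0 subr0 !addr0 Lx0 mxE addr0.
by rewrite b'k1 !subnn !binn.
Qed.

Lemma rDelta_rbasis i k : rDelta (rbasis K i k) = iter i (rtmul (@rDg K p)) (rDx_pow k).
Proof.
rewrite /rDelta (bigD1 i) //= [X in _ + X]big1 ?addr0 => [|j ne]; last first.
  by apply: big1 => l _; apply/matrixP => a b; rewrite !mxE (negbTE ne) scale0r.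
rewrite (bigD1 k) //= [X in _ + X]big1 ?addr0 => [|j ne]; last first.
  by apply/matrixP => a b; rewrite !mxE eqxx (negbTE ne) scale0r.
by apply/matrixP => a b; rewrite !mxE !eqxx scale1r.
Qed.

Lemma rDelta_rbasis_xdeg i k : txdeg_le k (rDelta (rbasis K i k)).
Proof.
have pow_deg := rDx_pow_xdeg (ltn_ord k).
move=> a b; rewrite rDelta_rbasis iter_rtmul_rDgE; split.
  move=> kb; rewrite (pow_deg _ _).1 //.
  by elim: (nat_of_ord i) => //= n ->; apply: lin_ext0.
by apply: iter_Lg_xdeg; apply: (pow_deg _ _).2.
Qed.

Lemma rDelta_rbasis_top i k (a b t c : 'I_p) : (b <= k)%N -> c = (k - b)%N :> nat ->
  rDelta (rbasis K i k) a b t c = 'C(k, b)%:R * (a == i + (k - b)%N%:R)%:R * (t == i)%:R.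
Proof.
move=> bk cE; rewrite rDelta_rbasis iter_rtmul_rDgE iter_LgE !natr_Zp.
by rewrite rDx_pow_top // subr_eq subr_eq0 [_ + i]addrC.
Qed.

Lemma rPSS m A : rP m.+2 A = \sum_i \sum_j rmul (rP m.+1 (rbasis K i j)) (rDelta A i j).
Proof. by []. Qed.

Fixpoint rP_lead (m : nat) (k u : 'I_p) : K :=
  match m with
  | 0%N => ((k == 0) && (u == 0))%:R
  | 1%N => (u == 0)%:R
  | S ((S _) as m') =>
      \sum_(b : 'I_p | (b <= k)%N) 'C(k, b)%:R * rP_lead m' b (u - (k - b)%N%:R * m'%:R)
  end.

Lemma rP_leadSS m k u : rP_lead m.+2 k u =
  \sum_(b : 'I_p | (b <= k)%N) 'C(k, b)%:R * rP_lead m.+1 b (u - (k - b)%N%:R * m.+1%:R).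
Proof. by []. Qed.

Lemma sum_shift (f : 'I_p -> K) z : \sum_u f (u - z) = \sum_u f u.
Proof. by rewrite [RHS](reindex_inj (addIr (- z))). Qed.

Lemma sum_rP_lead m k : \sum_u rP_lead m k u = m%:R ^+ k.
Proof.
elim: m k => [|[|m] IH] k.
- under eq_bigr => u _ do rewrite /= -mulnb natrM.
  rewrite -big_distrr /= (bigD1 0) //= big1 => [|u /negbTE ->//].
  by rewrite addr0 mulr1 expr0n -val_eqE.
- by rewrite expr1n (bigD1 0) //= big1 => [|u /negbTE ->]; rewrite ?eqxx ?addr0.
under eq_bigr => u _ do rewrite rP_leadSS.
rewrite exchange_big /=.
under eq_bigr => b _ do rewrite -big_distrr /= (sum_shift (rP_lead m.+1 b)) IH.
rewrite -[(m.+2)%:R]natr1 exprD1n (big_ord_widen p (fun b => (m.+1)%:R ^+ b *+ 'C(k, b))) //.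
by apply: eq_big => [b|b _]; rewrite ?ltnS // mulr_natl.
Qed.

Lemma rP_rbasis_xdeg m i k : xdeg_le k (rP m (rbasis K i k)).
Proof.
elim: m i k => [|[|m] IH] i k.
- exact/(xdeg_le_trans _ (xdeg_leZ _ rone_xdeg)).
- exact: rbasis_xdeg.
rewrite rPSS; apply: xdeg_le_sum => a; apply: xdeg_le_sum => b.
have [Dk_zero Dk_deg] := rDelta_rbasis_xdeg i k a b.
case: (leqP b k) => bk; last by rewrite Dk_zero // rmulr0; apply: xdeg_le0.
by rewrite -(subnKC bk); apply: rmul_xdeg.
Qed.

Lemma reps_rbasis i k : reps (rbasis K i k) = (k == 0)%:R.
Proof.
rewrite /reps (bigD1 i) //= [X in _ + X]big1 ?addr0 => [|j ne]; last first.
  by apply: big1 => l _; rewrite rbasisE (negbTE ne) mulr0.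
rewrite (bigD1 k) //= [X in _ + X]big1 ?addr0 => [|j ne]; last first.
  by rewrite rbasisE eqxx (negbTE ne) mulr0.
by rewrite rbasisE !eqxx mulr1 -val_eqE.
Qed.

Lemma rP_rbasis_top m i k t : rP m (rbasis K i k) t k = rP_lead m k (t - i * m%:R).
Proof.
elim: m i k t => [|[|m] IH] i k t.
- rewrite /= reps_rbasis mxE rone_rbasis mulr0 subr0 -mulnb natrM.
  by case: (k =P 0) => [->|]; rewrite ?rbasis_top ?mul1r ?mul0r.
- by rewrite /= rbasis_top mulr1 subr_eq0.
have Dk_deg := rDelta_rbasis_xdeg i k.
transitivity (\sum_a \sum_(b : 'I_p | (b <= k)%N)
   'C(k, b)%:R * (a == i + (k - b)%N%:R)%:R * rP_lead m.+1 b (t - i - a * m.+1%:R)).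
  rewrite rPSS summxE; apply: eq_bigr => a _; rewrite summxE [RHS]big_mkcond.
  apply: eq_bigr => b _; case: (leqP b k) => bk; last first.
    by rewrite ((Dk_deg a b).1 bk) rmulr0 mxE.
  have kb_lt : (k - b < p)%N by apply: leq_ltn_trans (leq_subr b k) (ltn_ord k).
  rewrite (@rmul_top _ _ t b (Ordinal kb_lt) k (@rP_rbasis_xdeg _ a b) (Dk_deg a b).2) /=;
    last by rewrite subnKC.
  under eq_bigr => s _ do rewrite IH (@rDelta_rbasis_top _ _ _ _ _ (Ordinal kb_lt)) //.
  have eq_sub_shift s : (t - s == i) = (s == t - i) by apply/eqP/eqP => [<-|->]; ring.
  under eq_bigr => s _ do rewrite eq_sub_shift mulrA.
  by rewrite sum_mul_eqb mulrC.
rewrite rP_leadSS exchange_big; apply: eq_bigr => b bk.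
under eq_bigr => a _ do rewrite mulrAC.
rewrite sum_mul_eqb; congr (_ * rP_lead _ b _).
rewrite -[(m.+2)%:R]natr1; ring.
Qed.

Lemma radford_nu_lead m : radford_nu K p m.+1 =
  \sum_k (-1) ^+ (nat_of_ord k) * \sum_i rP_lead m k (- k - i * m.+1%:R).
Proof.
rewrite /radford_nu /rtrace /= exchange_big /=.
apply: eq_bigr => k _; rewrite big_distrr /=; apply: eq_bigr => i _.
rewrite rS_top; last exact: rP_rbasis_xdeg.
rewrite rP_rbasis_top natr_Zp; congr (_ * rP_lead _ _ _).
by rewrite -[(m.+1)%:R]natr1; ring.
Qed.

Lemma radford_nuE : p \in [pchar K] -> forall n, (0 < n)%N ->
  radford_nu K p n = (~~ (p %| n)%N)%:R.
Proof.
move=> pcharK [//|m] _; rewrite radford_nu_lead.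
have [p_dvd | p_ndvd] /= := boolP (p %| m.+1)%N.
  have -> : (m.+1%:R : 'I_p) = 0 by rewrite Zp_nat; apply/val_inj/eqP.
  apply: big1 => k _; under eq_bigr => i _ do rewrite mulr0 subr0.
  by rewrite sumr_const card_ord -mulr_natr (pcharf0 pcharK) !mulr0.
have m1_unit : (m.+1%:R : 'I_p) \is a GRing.unit.
  by rewrite (unitZpE _ (isT : (1 < p)%N)) prime_coprime ?(pcharf_prime pcharK).
have sum_orbit k : \sum_i rP_lead m k (- k - i * m.+1%:R) = m%:R ^+ k.
  rewrite -(sum_rP_lead m k) [RHS](reindex_inj (h := fun i => - k - i * m.+1%:R)) //.
  by move=> x y /= /addrI /oppr_inj /(mulIr m1_unit).
under eq_bigr => k _ do rewrite sum_orbit -exprMn mulN1r.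
set x := - (m%:R : K).
have x_frob : x ^+ p = x by rewrite -(pFrobenius_autE pcharK) rmorphN rmorph_nat.
have x_ne1 : x - 1 != 0 by rewrite /x -opprD natr1 oppr_eq0 -(dvdn_pcharf pcharK).
by apply: (mulfI x_ne1); rewrite -subrX1 x_frob mulr1.
Qed.

End RadfordLeadingTerms.

Lemma radford_nu_ndvd (K : fieldType) (p : nat) : p \in [pchar K] ->
  forall n, (0 < n)%N -> radford_nu K p n = (~~ (p %| n)%N)%:R.
Proof.
move=> pcharK; have := prime_gt1 (pcharf_prime pcharK).
by case: p pcharK => [|[|q]] // pcharK _; apply: radford_nuE.
Qed.

Unset Implicit Arguments.

Theorem proposition3p4 (K : closedFieldType) (p : nat) (hp : p \in [pchar K]) :
  is_minimal_poly_seq (radford_nu K p) ('X^p - 1).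
Proof. exact: is_minimal_poly_seq_ndvd hp (radford_nu_ndvd hp). Qed.
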